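(* Let $\mathcal{C}$ be a covering of a finite set $E$. If $XH$ induced by $\mathcal{C}$ is the closure operator of a matroid on $E$, then $VH$ induced by $\mathcal{C}$ is also the closure operator of a matroid on $E$; moreover $\mathcal{I}_{XH}(\mathcal{C})=\mathcal{I}_{VH}(\mathcal{C})$ and $\mathcal{L}_{XH}(M(\mathcal{C}))=\mathcal{L}_{VH}(M(\mathcal{C}))$.
   Context: A covering of $E$ is a family of nonempty subsets of $E$ with union $E$. $N(x)=\bigcap\{K\in\mathcal{C}:x\in K\}$; $XH(X)=\{x:N(x)\cap X\neq\emptyset\}$; $VH(X)=\bigcup\{N(x):N(x)\cap X\neq\emptyset\}$. When $H\in\{XH,VH\}$ is the closure operator of a matroid (closure $cl(X)=\{a:r(X\cup\{a\})=r(X)\}$), $\mathcal{I}_H(\mathcal{C})=\{I\subseteq E:x\notin H(I-\{x\})\ \forall x\in I\}$ is its family of independent sets and $\mathcal{L}_H(M(\mathcal{C}))=\{X:H(X)=X\}$ its set of closed sets. *)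

From mathcomp Require Import all_boot.
Set Implicit Arguments. Unset Strict Implicit. Unset Printing Implicit Defensive.

(* The finite ground set E is the whole finite type T. *)
Section Covering.
Variable T : finType.

Definition is_covering (C : {set {set T}}) : Prop :=
  set0 \notin C /\ \bigcup_(K in C) K = [set: T].

Definition Nbd (C : {set {set T}}) (x : T) : {set T} :=
  \bigcap_(K in C | x \in K) K.

Definition XH (C : {set {set T}}) (X : {set T}) : {set T} :=
  [set x | Nbd C x :&: X != set0].

Definition VH (C : {set {set T}}) (X : {set T}) : {set T} :=
  \bigcup_(x | Nbd C x :&: X != set0) Nbd C x.

Definition is_matroid (I : {set {set T}}) : Prop :=
  [/\ set0 \in I,
      (forall A B : {set T}, B \in I -> A \subset B -> A \in I) &
      (forall A B : {set T}, A \in I -> B \in I -> #|A| < #|B| ->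
         exists2 x, x \in B :\: A & x |: A \in I)].

Definition mrank (I : {set {set T}}) (X : {set T}) : nat :=
  \max_(A in I | A \subset X) #|A|.

Definition mclosure (I : {set {set T}}) (X : {set T}) : {set T} :=
  [set a | mrank I (a |: X) == mrank I X].

Definition is_matroid_closure (H : {set T} -> {set T}) : Prop :=
  exists I, is_matroid I /\ forall X, H X = mclosure I X.

Definition indep_of (H : {set T} -> {set T}) : {set {set T}} :=
  [set I : {set T} | [forall x in I, x \notin H (I :\ x)]].

Definition closed_of (H : {set T} -> {set T}) : {set {set T}} :=
  [set X : {set T} | H X == X].

End Covering.

From mathcomp Require Import all_boot.

(* If XH is a matroid closure, it has no loops (XH of the empty set is empty),
   so comparing ranks of singletons and pairs makes the relation
   y \in N(x) symmetric. Since N is also transitive (y \in N(x) implies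
   N(y) \subset N(x)), every N(x) meeting X is contained in XH(X), i.e.
   VH = XH; the independent and closed sets then agree trivially. *)

Section MatroidRank.
Variables (T : finType) (I : {set {set T}}).
Implicit Types (A B : {set T}) (x y : T).

Lemma mrankS A B : A \subset B -> mrank I A <= mrank I B.
Proof.
move=> AB; apply/bigmax_leqP => D /andP[DI DA].
by apply: (@leq_bigmax_cond _ _ _ D); rewrite DI (subset_trans DA AB).
Qed.

Lemma mrank_le_card A : mrank I A <= #|A|.
Proof. by apply/bigmax_leqP => D /andP[_ DA]; apply: subset_leq_card. Qed.

Lemma mrank0 : mrank I set0 = 0.
Proof. by apply/eqP; rewrite -leqn0 -(cards0 T) mrank_le_card. Qed.

Lemma mclosure1_sym x y : x \notin mclosure I set0 ->
  x \in mclosure I [set y] -> y \in mclosure I [set x].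
Proof.
rewrite !inE setU0 mrank0 -lt0n => rkx /eqP rkxy.
have rky : mrank I [set y] <= 1 by rewrite -(cards1 y) mrank_le_card.
rewrite setUC rkxy; apply/eqP/anti_leq.
by rewrite (leq_trans rky rkx) -rkxy mrankS ?subsetUl.
Qed.

End MatroidRank.

Section Neighbourhoods.
Variables (T : finType) (C : {set {set T}}).
Implicit Types (X : {set T}) (x y : T).

Lemma Nbd_refl x : x \in Nbd C x.
Proof. by apply/bigcapP => K /andP[]. Qed.

Lemma Nbd_trans x y : y \in Nbd C x -> Nbd C y \subset Nbd C x.
Proof.
move=> /bigcapP yNx; apply/subsetP => z /bigcapP zNy.
by apply/bigcapP => K /andP[KC xK]; apply: zNy; rewrite KC yNx ?KC.
Qed.

Lemma XH0 : XH C set0 = set0.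
Proof. by apply/setP => x; rewrite !inE setI0 eqxx. Qed.

Lemma XH1 x y : (x \in XH C [set y]) = (y \in Nbd C x).
Proof.
rewrite inE; apply/set0Pn/idP => [[z]|yNx]; last by exists y; rewrite !inE yNx /=.
by rewrite !inE => /andP[zNx /eqP <-].
Qed.

Lemma Nbd_sym_of_matroid_closure x y : is_matroid_closure (XH C) ->
  y \in Nbd C x -> x \in Nbd C y.
Proof.
case=> I [_ clI]; rewrite -!XH1 !clI; apply: mclosure1_sym.
by rewrite -clI XH0 inE.
Qed.

Lemma VH_eq_XH : (forall x y, y \in Nbd C x -> x \in Nbd C y) ->
  forall X, VH C X = XH C X.
Proof.
move=> Nsym X; apply/setP => y; apply/bigcupP/idP => [[x xX yNx]|yX].
  case/set0Pn: xX => z /setIP[zNx zX]; rewrite inE; apply/set0Pn; exists z.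
  by rewrite inE zX (subsetP (Nbd_trans y x (Nsym x y yNx))).
by exists y; [rewrite inE in yX | apply: Nbd_refl].
Qed.

End Neighbourhoods.

Theorem proposition28 (T : finType) (C : {set {set T}}) :
  is_covering C ->
  is_matroid_closure (XH C) ->
  [/\ is_matroid_closure (VH C),
      indep_of (XH C) = indep_of (VH C) &
      closed_of (XH C) = closed_of (VH C)].
Proof.
move=> _ XHmat.
have VHE := @VH_eq_XH T C (fun x y => @Nbd_sym_of_matroid_closure T C x y XHmat).
split.
- by case: XHmat => I [Imat clI]; exists I; split=> // X; rewrite VHE.
- by apply/setP => A; rewrite !inE; apply/eq_forallb => x; rewrite VHE.
- by apply/setP => A; rewrite !inE VHE.
Qed.
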